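(* Consider any concurrent run of the Block-STM algorithm (described in the context) on a block of $n$ transactions. If at some time $T$ simultaneously $\mathit{execution\_idx}\ge n$, $\mathit{validation\_idx}\ge n$ and $\mathit{num\_active\_tasks}=0$, then all transactions $tx_0,\dots,tx_{n-1}$ are globally committed at time $T$.
   Context: Model: threads perform atomic operations that appear to take place in a single global order; a ''time'' is a point in this order. Locks protect per-transaction status and dependency sets. Problem. A block is a sequence of transactions $tx_0,\dots,tx_{n-1}$ ($n=\mathtt{BLOCK.size()}$), each a deterministic program reading and writing memory locations. Shared state. MVMemory: a map $\mathit{data}$ from pairs $(\text{location}, \text{txn index})$ to either (incarnation number, value) or a marker ESTIMATE; arrays $\mathit{last\_written\_locations}[j]$ and $\mathit{last\_read\_set}[j]$, each loaded/stored atomically. A version is $(j,i)$ (transaction index, incarnation number). Scheduler: atomic counters $\mathit{execution\_idx}=0$, $\mathit{validation\_idx}=0$, $\mathit{decrease\_cnt}=0$, $\mathit{num\_active\_tasks}=0$, flag $\mathit{done\_marker}=$false; per transaction $j$ a lock-protected $\mathit{txn\_status}[j]=(\text{incarnation},\text{status})$, initially $(0,\mathtt{READY\_TO\_EXECUTE})$, status $\in\{\mathtt{READY\_TO\_EXECUTE},\mathtt{EXECUTING},\mathtt{EXECUTED},\mathtt{ABORTING}\}$, and a lock-protected dependency set $\mathit{txn\_dependency}[j]$, initially empty. MVMemory operations. $\mathtt{read}(p,j)$: among entries $(p,k)$ with $k<j$ take the largest $k$; if none, return NOT_FOUND; if ESTIMATE return READ_ERROR with blocking index $k$; else OK with version and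 value. $\mathtt{record}((j,i),R,W)$: write $\mathit{data}[(p,j)]:=(i,v)$ for $(p,v)\in W$; remove entries $(p,j)$ for previously written locations not rewritten; update $\mathit{last\_written\_locations}[j]$; store $\mathit{last\_read\_set}[j]:=R$; return whether a location not previously written was written. $\mathtt{convert\_writes\_to\_estimates}(j)$ replaces all entries $(p,j)$, $p\in\mathit{last\_written\_locations}[j]$, by ESTIMATE. $\mathtt{validate\_read\_set}(j)$ re-reads each recorded location with $\mathtt{read}(p,j)$ and returns true iff each yields the same recorded version (NOT_FOUND for recorded $\bot$) and no READ_ERROR. VM.execute($j$) runs $tx_j$ locally, reading its own writes, otherwise calling $\mathtt{read}(p,j)$ (NOT_FOUND: read initial storage, record $(p,\bot)$; OK: record version; READ_ERROR: stop and return blocking index); returns read-set and write-set; it never writes shared memory. Scheduler. $\mathtt{decrease\_execution\_idx}(t)$/$\mathtt{decrease\_validation\_idx}(t)$ set the index to $\min(\text{index},t)$ then increment $\mathit{decrease\_cnt}$. $\mathtt{try\_incarnate}(k)$: if $k<n$ and status of $tx_k$ is $\mathtt{READY\_TO\_EXECUTE}$ with incarnation $i$, set $\mathtt{EXECUTING}$ and return $(k,i)$; else decrement $\mathit{num\_active\_tasks}$, return none. $\mathtt{next\_task}$: if $\mathit{validation\_idx}<\mathit{execution\_idx}$: if $\mathit{validation\_idx}\ge n$ call check_done, return none; else increment $\mathit{num\_active\_tasks}$, fetch-and-increment $\mathit{validation\_idx}$ getting $k$; if $k<n$ and $tx_k$'s status is $\mathtt{EXECUTED}$ with incarnation $i$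 return validation task $(k,i)$, else decrement $\mathit{num\_active\_tasks}$, return none. Otherwise: if $\mathit{execution\_idx}\ge n$ call check_done, return none; else increment $\mathit{num\_active\_tasks}$, fetch-and-increment $\mathit{execution\_idx}$ getting $k$, return $\mathtt{try\_incarnate}(k)$. $\mathtt{check\_done}$: read $c:=\mathit{decrease\_cnt}$; if $\min(\mathit{execution\_idx},\mathit{validation\_idx})\ge n$, $\mathit{num\_active\_tasks}=0$ and $\mathit{decrease\_cnt}=c$, set $\mathit{done\_marker}:=$true. Execution task $(k,i)$: run VM.execute($k$). On READ_ERROR with blocking $b$: under lock of $\mathit{txn\_dependency}[b]$, if status of $tx_b$ is $\mathtt{EXECUTED}$, retry the execution immediately; else set $tx_k$'s status to $\mathtt{ABORTING}$, add $k$ to $\mathit{txn\_dependency}[b]$, release, decrement $\mathit{num\_active\_tasks}$. Otherwise $w:=\mathtt{record}(\dots)$; set status $\mathtt{EXECUTED}$; swap out $\mathit{txn\_dependency}[k]$; for each dependent $d$ set $\mathit{txn\_status}[d]:=(\text{incarnation}+1,\mathtt{READY\_TO\_EXECUTE})$, and if any, $\mathtt{decrease\_execution\_idx}$(min dependent); if $\mathit{validation\_idx}>k$: if $w$ then $\mathtt{decrease\_validation\_idx}(k)$ else return validation task $(k,i)$ to the caller without changing $\mathit{num\_active\_tasks}$; if no task returned, decrement $\mathit{num\_active\_tasks}$. Validation task $(k,i)$: if $\mathtt{validate\_read\_set}(k)$ is false and, under lock, $\mathit{txn\_status}[k]=(i,\mathtt{EXECUTED})$, set status $\mathtt{ABORTING}$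 (aborted). If aborted: convert writes of $k$ to ESTIMATE; set $\mathit{txn\_status}[k]:=(i+1,\mathtt{READY\_TO\_EXECUTE})$; $\mathtt{decrease\_validation\_idx}(k+1)$; if $\mathit{execution\_idx}>k$ and $\mathtt{try\_incarnate}(k)$ returns a version, return that execution task (without changing $\mathit{num\_active\_tasks}$). Otherwise decrement $\mathit{num\_active\_tasks}$. Each thread loops while $\mathit{done\_marker}$ is false, performing tasks in hand or obtained via next_task; it joins on exit. Intervals. Pre-validation of $tx_j$: from a fetch-and-increment of $\mathit{validation\_idx}$ returning $j$ until just before the corresponding decrement in next_task or just before the resulting validation task is returned. Execution of $(j,i)$: from setting $tx_j$'s status to $\mathtt{EXECUTING}$ (incarnation $i$) until abort via the dependency mechanism, or just before the final decrement of $\mathit{num\_active\_tasks}$ after it, or just before a validation task is returned from it. Validation of $(j,i)$: from handing the validation task to a thread until just before its final decrement of $\mathit{num\_active\_tasks}$ or just before it returns an execution task. Global commit index at time $T$: minimum of $\mathit{validation\_idx}$, all $j$ with status not $\mathtt{EXECUTED}$, indices with ongoing pre-validation, and indices of versions with ongoing execution or validation. $tx_0,\dots,tx_k$ are globally committed at $T$ if this index exceeds $k$. *)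

(* Operational model of the Block-STM algorithm:
   a global state (shared memory + per-thread program counters) and a
   deterministic per-thread atomic step function; a run is any interleaving
   of thread steps from the initial state. *)
From HB Require Import structures.
From mathcomp Require Import all_boot all_order all_algebra.
Set Implicit Arguments. Unset Strict Implicit. Unset Printing Implicit Defensive.

(* Transactions: deterministic programs reading/writing memory locations.  *)
Inductive prog (L V : Type) : Type :=
| PDone
| PRead of L & (V -> prog L V)
| PWrite of L & V & prog L V.
Arguments PDone {L V}.

Inductive tstatus := READY_TO_EXECUTE | EXECUTING | EXECUTED | ABORTING.

Definition is_executed (st : nat * tstatus) : bool :=
  if st.2 is EXECUTED then true else false.
Definition is_ready (st : nat * tstatus) : bool :=
  if st.2 is READY_TO_EXECUTE then true else false.

(* MVMemory entries: (incarnation, value) or ESTIMATE *)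
Inductive mventry (V : Type) := Estimate | Written of nat & V.
Arguments Estimate {V}.

Inductive read_res (V : Type) := NotFound | ReadOK of nat & nat & V | ReadError of nat.
Arguments NotFound {V}. Arguments ReadError {V}.

(* read-set entries: location and version read (None = ⊥, initial storage) *)
Definition rset (L : Type) := seq (L * option (nat * nat)).

Inductive task := ExecTask of nat & nat | ValTask of nat & nat.

(* MVMemory.read(p, j): largest k < j with an entry (p,k). *)
Fixpoint mv_scan (V : Type) (d : nat -> option (mventry V)) (k : nat) : read_res V :=
  match k with
  | 0 => NotFound
  | k'.+1 => match d k' with
             | None => mv_scan d k'
             | Some Estimate => ReadError k'
             | Some (Written i v) => ReadOK k' i v
             end
  end.
Definition mv_read (L V : Type) (data : L -> nat -> option (mventry V)) (p : L) (j : nat) :=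
  mv_scan (data p) j.

(* Thread program counters.  Each constructor is a point of the code just   *)
(* before an atomic operation (or a purely local step).                    *)
Inductive tstate (L : eqType) (V : Type) :=
| TLoop of option task             (* main loop: check done_marker, task in hand *)
| TExit of option task             (* thread has exited (joined) *)
(* next_task *)
| TN1                              (* load validation_idx *)
| TN2 of nat                       (* load execution_idx, compare *)
| TNV1                             (* next_version_to_validate: load validation_idx *)
| TNV2                             (* increment num_active_tasks *)
| TNV3                             (* fetch&increment validation_idx *)
| TNV4 of nat                      (* read status of fetched index *)
| TNV5 of nat                      (* decrement num_active_tasks *)
| TNE1                             (* next_version_to_execute: load execution_idx *)
| TNE2                             (* increment num_active_tasks *)
| TNE3                             (* fetch&increment execution_idx *)
| TTI of nat                       (* try_incarnate from next_task *)
| TDec                             (* decrement num_active_tasks, no task *)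
(* check_done *)
| TCD1 | TCD2 of nat | TCD3 of nat & nat | TCD4 of nat | TCD5 of nat | TCD6
(* execution task (k,i): VM.execute, local state: program, read set, write buffer *)
| TVM of nat & nat & prog L V & rset L & seq (L * V)
(* add_dependency (k, i, blocking b) *)
| TAD1 of nat & nat & nat          (* acquire lock of txn_dependency[b], read status b *)
| TAD2 of nat & nat & nat          (* set status k ABORTING *)
| TAD3 of nat & nat & nat          (* insert k into txn_dependency[b], release *)
(* record: apply write set, then rcu-update written locations, then store read set *)
| TRW of nat & nat & seq (L * V) & rset L & seq (L * V)
| TRR of nat & nat & seq L & seq L & rset L & seq L
| TRRS of nat & nat & bool & rset L
(* finish_execution (k, i, wrote_new_location) *)
| TFE1 of nat & nat & bool         (* set status EXECUTED *)
| TFE2 of nat & nat & bool         (* swap out txn_dependency[k] *)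
| TFE3 of nat & nat & bool & seq nat & seq nat (* resume dependencies *)
| TFEX1 of nat & nat & bool & nat  (* decrease_execution_idx: min *)
| TFEX2 of nat & nat & bool        (* decrease_execution_idx: ++decrease_cnt *)
| TFE4 of nat & nat & bool         (* load validation_idx *)
| TFEV1 of nat & nat               (* decrease_validation_idx(k): min *)
| TFEV2 of nat & nat               (* ++decrease_cnt *)
| TDecE of nat & nat               (* final decrement of the execution *)
(* validation task (k, i) *)
| TVL of nat & nat                 (* load last_read_set[k] *)
| TVR of nat & nat & rset L        (* re-read recorded locations *)
| TVA of nat & nat                 (* try_validation_abort *)
| TCE1 of nat & nat                (* convert_writes_to_estimates: load locations *)
| TCE2 of nat & nat & seq L        (* mark each as ESTIMATE, then set_ready_status *)
| TFVV1 of nat & nat               (* decrease_validation_idx(k+1): min *)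
| TFVV2 of nat & nat               (* ++decrease_cnt *)
| TFV3 of nat & nat                (* load execution_idx *)
| TTIv of nat & nat                (* try_incarnate(k) from finish_validation *)
| TDecV of nat & nat.              (* final decrement of the validation *)
Arguments TN1 {L V}. Arguments TNV1 {L V}. Arguments TNV2 {L V}. Arguments TNV3 {L V}.
Arguments TNE1 {L V}. Arguments TNE2 {L V}. Arguments TNE3 {L V}. Arguments TDec {L V}.
Arguments TCD1 {L V}. Arguments TCD6 {L V}.
Arguments TLoop {L V}.
Arguments TExit {L V}.
Arguments TN2 {L V}.
Arguments TNV4 {L V}.
Arguments TNV5 {L V}.
Arguments TTI {L V}.
Arguments TCD2 {L V}.
Arguments TCD3 {L V}.
Arguments TCD4 {L V}.
Arguments TCD5 {L V}.
Arguments TAD1 {L V}.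
Arguments TAD2 {L V}.
Arguments TAD3 {L V}.
Arguments TFE1 {L V}.
Arguments TFE2 {L V}.
Arguments TFE3 {L V}.
Arguments TFEX1 {L V}.
Arguments TFEX2 {L V}.
Arguments TFE4 {L V}.
Arguments TFEV1 {L V}.
Arguments TFEV2 {L V}.
Arguments TDecE {L V}.
Arguments TVL {L V}.
Arguments TVA {L V}.
Arguments TCE1 {L V}.
Arguments TFVV1 {L V}.
Arguments TFVV2 {L V}.
Arguments TFV3 {L V}.
Arguments TTIv {L V}.
Arguments TDecV {L V}.
Arguments TRR {L V}. Arguments TRRS {L V}. Arguments TVR {L V}. Arguments TCE2 {L V}.

Record gstate (L : eqType) (V : Type) := GState {
  data : L -> nat -> option (mventry V);
  last_written : nat -> seq L;
  last_read : nat -> rset L;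
  exec_idx : nat;
  val_idx : nat;
  dec_cnt : nat;
  active : int;                     (* num_active_tasks *)
  done_marker : bool;
  status : nat -> nat * tstatus;
  deps : nat -> seq nat;            (* txn_dependency *)
  dlock : nat -> bool;              (* lock of txn_dependency[j] held *)
  thr : nat -> tstate L V }.

Section Setters.
Variables (L : eqType) (V : Type).
Implicit Types (s : gstate L V).
Definition updn (T : Type) (f : nat -> T) (k : nat) (y : T) := fun z => if z == k then y else f z.
Definition set_data s d := GState d (last_written s) (last_read s) (exec_idx s) (val_idx s) (dec_cnt s) (active s) (done_marker s) (status s) (deps s) (dlock s) (thr s).
Definition upd_data s (p : L) (k : nat) (e : option (mventry V)) :=
  set_data s (fun q j => if (q == p) && (j == k) then e else data s q j).
Definition set_lw s k l := GState (data s) (updn (last_written s) k l) (last_read s) (exec_idx s) (val_idx s) (dec_cnt s) (active s) (done_marker s) (status s) (deps s) (dlock s) (thr s).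
Definition set_lr s k r := GState (data s) (last_written s) (updn (last_read s) k r) (exec_idx s) (val_idx s) (dec_cnt s) (active s) (done_marker s) (status s) (deps s) (dlock s) (thr s).
Definition set_exec s x := GState (data s) (last_written s) (last_read s) x (val_idx s) (dec_cnt s) (active s) (done_marker s) (status s) (deps s) (dlock s) (thr s).
Definition set_val s x := GState (data s) (last_written s) (last_read s) (exec_idx s) x (dec_cnt s) (active s) (done_marker s) (status s) (deps s) (dlock s) (thr s).
Definition set_dec s x := GState (data s) (last_written s) (last_read s) (exec_idx s) (val_idx s) x (active s) (done_marker s) (status s) (deps s) (dlock s) (thr s).
Definition set_active s x := GState (data s) (last_written s) (last_read s) (exec_idx s) (val_idx s) (dec_cnt s) x (done_marker s) (status s) (deps s) (dlock s) (thr s).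
Definition set_done s x := GState (data s) (last_written s) (last_read s) (exec_idx s) (val_idx s) (dec_cnt s) (active s) x (status s) (deps s) (dlock s) (thr s).
Definition set_status s k x := GState (data s) (last_written s) (last_read s) (exec_idx s) (val_idx s) (dec_cnt s) (active s) (done_marker s) (updn (status s) k x) (deps s) (dlock s) (thr s).
Definition set_deps s k x := GState (data s) (last_written s) (last_read s) (exec_idx s) (val_idx s) (dec_cnt s) (active s) (done_marker s) (status s) (updn (deps s) k x) (dlock s) (thr s).
Definition set_dlock s k x := GState (data s) (last_written s) (last_read s) (exec_idx s) (val_idx s) (dec_cnt s) (active s) (done_marker s) (status s) (deps s) (updn (dlock s) k x) (thr s).
Definition set_thr s t p := GState (data s) (last_written s) (last_read s) (exec_idx s) (val_idx s) (dec_cnt s) (active s) (done_marker s) (status s) (deps s) (dlock s) (updn (thr s) t p).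
Definition incr_active s := set_active s (active s + 1)%R.
Definition decr_active s := set_active s (active s - 1)%R.
End Setters.

Definition wlookup (L : eqType) (V : Type) (ws : seq (L * V)) (q : L) : option V :=
  if [seq x <- ws | x.1 == q] is x :: _ then Some x.2 else None.
Definition wupdate (L : eqType) (V : Type) (ws : seq (L * V)) (q : L) (v : V) :=
  (q, v) :: [seq x <- ws | x.1 != q].

Definition seq_min (ds : seq nat) : nat := foldr minn (head 0 ds) ds.

Definition read_agrees (V : Type) (r : read_res V) (ver : option (nat * nat)) : bool :=
  match r, ver with
  | NotFound, None => true
  | ReadOK j i _, Some (j', i') => (j == j') && (i == i')
  | _, _ => false
  end.

(* One atomic step of thread t (None: thread blocked on a lock, or exited). *)
Definition tstep (L : eqType) (V : Type) (init : L -> V) (n : nat)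
    (tx : nat -> prog L V) (s : gstate L V) (t : nat) : option (gstate L V) :=
  let go (p : tstate L V) (s' : gstate L V) := Some (set_thr s' t p) in
  match thr s t with
  | TLoop tk =>
      if done_marker s then go (TExit tk) s else
      match tk with
      | None => go TN1 s
      | Some (ExecTask k i) => go (TVM k i (tx k) [::] [::]) s
      | Some (ValTask k i) => go (TVL k i) s
      end
  | TExit _ => None
  | TN1 => go (TN2 (val_idx s)) s
  | TN2 v => if v < exec_idx s then go TNV1 s else go TNE1 s
  | TNV1 => if n <= val_idx s then go TCD1 s else go TNV2 s
  | TNV2 => go TNV3 (incr_active s)
  | TNV3 => let k := val_idx s in
            go (if k < n then TNV4 k else TNV5 k) (set_val s k.+1)
  | TNV4 k => if is_executed (status s k) then go (TLoop (Some (ValTask k (status s k).1))) s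
              else go (TNV5 k) s
  | TNV5 _ => go (TLoop None) (decr_active s)
  | TNE1 => if n <= exec_idx s then go TCD1 s else go TNE2 s
  | TNE2 => go TNE3 (incr_active s)
  | TNE3 => let k := exec_idx s in go (TTI k) (set_exec s k.+1)
  | TTI k => if (k < n) && is_ready (status s k) then
               let i := (status s k).1 in
               go (TLoop (Some (ExecTask k i))) (set_status s k (i, EXECUTING))
             else go TDec s
  | TDec => go (TLoop None) (decr_active s)
  | TCD1 => go (TCD2 (dec_cnt s)) s
  | TCD2 c => go (TCD3 c (exec_idx s)) s
  | TCD3 c e => if n <= minn e (val_idx s) then go (TCD4 c) s else go (TLoop None) s
  | TCD4 c => if active s == 0%R then go (TCD5 c) s else go (TLoop None) s
  | TCD5 c => if dec_cnt s == c then go TCD6 s else go (TLoop None) s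
  | TCD6 => go (TLoop None) (set_done s true)
  | TVM k i p rs ws =>
      match p with
      | PDone => go (TRW k i ws rs ws) s
      | PWrite q v p' => go (TVM k i p' rs (wupdate ws q v)) s
      | PRead q f =>
          match wlookup ws q with
          | Some v => go (TVM k i (f v) rs ws) s
          | None =>
              match mv_read (data s) q k with
              | NotFound => go (TVM k i (f (init q)) (rcons rs (q, None)) ws) s
              | ReadOK j i' v => go (TVM k i (f v) (rcons rs (q, Some (j, i'))) ws) s
              | ReadError b => go (TAD1 k i b) s
              end
          end
      end
  | TAD1 k i b =>
      if dlock s b then None else
      if is_executed (status s b) then go (TVM k i (tx k) [::] [::]) s
      else go (TAD2 k i b) (set_dlock s b true)
  | TAD2 k i b => go (TAD3 k i b) (set_status s k ((status s k).1, ABORTING))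
  | TAD3 k i b =>
      go TDec (set_dlock (set_deps s b (if k \in deps s b then deps s b else k :: deps s b)) b false)
  | TRW k i ws rs ((q, v) :: todo) => go (TRW k i ws rs todo) (upd_data s q k (Some (Written i v)))
  | TRW k i ws rs [::] =>
      let new := map fst ws in let prev := last_written s k in
      go (TRR k i new prev rs [seq q <- prev | q \notin new]) s
  | TRR k i new prev rs (q :: todo) => go (TRR k i new prev rs todo) (upd_data s q k None)
  | TRR k i new prev rs [::] =>
      go (TRRS k i (has (fun q => q \notin prev) new) rs) (set_lw s k new)
  | TRRS k i w rs => go (TFE1 k i w) (set_lr s k rs)
  | TFE1 k i w => go (TFE2 k i w) (set_status s k (i, EXECUTED))
  | TFE2 k i w =>
      if dlock s k then None else go (TFE3 k i w (deps s k) (deps s k)) (set_deps s k [::])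
  | TFE3 k i w ds (d :: rem) =>
      go (TFE3 k i w ds rem) (set_status s d ((status s d).1.+1, READY_TO_EXECUTE))
  | TFE3 k i w ds [::] =>
      if ds is [::] then go (TFE4 k i w) s else go (TFEX1 k i w (seq_min ds)) s
  | TFEX1 k i w t' => go (TFEX2 k i w) (set_exec s (minn (exec_idx s) t'))
  | TFEX2 k i w => go (TFE4 k i w) (set_dec s (dec_cnt s).+1)
  | TFE4 k i w =>
      if k < val_idx s then
        (if w then go (TFEV1 k i) s else go (TLoop (Some (ValTask k i))) s)
      else go (TDecE k i) s
  | TFEV1 k i => go (TFEV2 k i) (set_val s (minn (val_idx s) k))
  | TFEV2 k i => go (TDecE k i) (set_dec s (dec_cnt s).+1)
  | TDecE _ _ => go (TLoop None) (decr_active s)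
  | TVL k i => go (TVR k i (last_read s k)) s
  | TVR k i ((q, ver) :: rem) =>
      if read_agrees (mv_read (data s) q k) ver then go (TVR k i rem) s else go (TVA k i) s
  | TVR k i [::] => go (TDecV k i) s
  | TVA k i =>
      if ((status s k).1 == i) && is_executed (status s k) then
        go (TCE1 k i) (set_status s k (i, ABORTING))
      else go (TDecV k i) s
  | TCE1 k i => go (TCE2 k i (last_written s k)) s
  | TCE2 k i (q :: rem) => go (TCE2 k i rem) (upd_data s q k (Some Estimate))
  | TCE2 k i [::] =>
      go (TFVV1 k i) (set_status s k ((status s k).1.+1, READY_TO_EXECUTE))
  | TFVV1 k i => go (TFVV2 k i) (set_val s (minn (val_idx s) k.+1))
  | TFVV2 k i => go (TFV3 k i) (set_dec s (dec_cnt s).+1)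
  | TFV3 k i => if k < exec_idx s then go (TTIv k i) s else go (TDecV k i) s
  | TTIv k i =>
      if (k < n) && is_ready (status s k) then
        let i' := (status s k).1 in
        go (TLoop (Some (ExecTask k i'))) (set_status s k (i', EXECUTING))
      else go (TDecV k i) s
  | TDecV _ _ => go (TLoop None) (decr_active s)
  end.

Definition init_state (L : eqType) (V : Type) : gstate L V :=
  GState (fun _ _ => None) (fun _ => [::]) (fun _ => [::]) 0 0 0 0%R false
         (fun _ => (0, READY_TO_EXECUTE)) (fun _ => [::]) (fun _ => false) (fun _ => TLoop None).

Inductive reachable (L : eqType) (V : Type) (init : L -> V) (n : nat)
    (tx : nat -> prog L V) (m : nat) : gstate L V -> Prop :=
| reach_init : reachable init n tx m (init_state L V)
| reach_step s t s' : reachable init n tx m s -> t < m ->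
    tstep init n tx s t = Some s' -> reachable init n tx m s'.

Definition prevalidating (L : eqType) (V : Type) (p : tstate L V) (j : nat) : Prop :=
  p = TNV4 j \/ p = TNV5 j.

Definition executing (L : eqType) (V : Type) (p : tstate L V) (j i : nat) : Prop :=
  match p with
  | TLoop (Some (ExecTask k i')) | TExit (Some (ExecTask k i')) => k = j /\ i' = i
  | TVM k i' _ _ _ | TAD1 k i' _ | TAD2 k i' _ | TAD3 k i' _
  | TRW k i' _ _ _ | TRR k i' _ _ _ _ | TRRS k i' _ _
  | TFE1 k i' _ | TFE2 k i' _ | TFE3 k i' _ _ _ | TFEX1 k i' _ _ | TFEX2 k i' _
  | TFE4 k i' _ | TFEV1 k i' | TFEV2 k i' | TDecE k i' => k = j /\ i' = i
  | _ => False
  end.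

Definition validating (L : eqType) (V : Type) (p : tstate L V) (j i : nat) : Prop :=
  match p with
  | TLoop (Some (ValTask k i')) | TExit (Some (ValTask k i')) => k = j /\ i' = i
  | TVL k i' | TVR k i' _ | TVA k i' | TCE1 k i' | TCE2 k i' _ | TFVV1 k i'
  | TFVV2 k i' | TFV3 k i' | TTIv k i' | TDecV k i' => k = j /\ i' = i
  | _ => False
  end.

(* x belongs to the set whose minimum is the global commit index *)
Definition in_commit_set (L : eqType) (V : Type) (n m : nat) (s : gstate L V) (x : nat) : Prop :=
  x = val_idx s \/
  (x < n /\ ~~ is_executed (status s x)) \/
  (exists t, t < m /\
     (prevalidating (thr s t) x \/ (exists i, executing (thr s t) x i)
      \/ (exists i, validating (thr s t) x i))).

(* tx_0..tx_k globally committed: global commit index (the minimum) exceeds k *)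
Definition globally_committed (L : eqType) (V : Type) (n m : nat) (s : gstate L V) (k : nat) : Prop :=
  forall x, in_commit_set n m s x -> k < x.

From HB Require Import structures.
From mathcomp Require Import all_boot all_order all_algebra zify.

(* Every reachable state satisfies an invariant with two main parts.  First,
   num_active_tasks is the number of threads whose program counter lies inside a
   task, i.e. between an increment of num_active_tasks and the matching decrement.
   Second, every transaction j < n that is not EXECUTED is accounted for: a
   READY_TO_EXECUTE one by execution_idx <= j, an ABORTING one by its membership
   in a dependency set txn_dependency[b] with b < j, and otherwise by a thread in
   the middle of a task on j.  A dependency set of b is only nonempty while b is
   not EXECUTED or its executor has yet to swap the set out; preserving this needs
   the lock discipline of add_dependency.
   When num_active_tasks = 0 no thread is inside a task, so if moreover
   execution_idx >= n, induction on j shows that every transaction below n is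
   EXECUTED; and no pre-validation, execution or validation interval is open, so
   the only remaining element of the commit set is validation_idx >= n. *)

Arguments updn : simpl never.

Lemma count_updn {T : Type} (a : pred T) (f : nat -> T) t x {r : seq nat} :
  uniq r -> t \in r ->
  count (a \o updn f t x) r + a (f t) = count (a \o f) r + a x.
Proof.
elim: r => // u r IHr /= /andP[ur uniq_r]; rewrite in_cons.
case: (eqVneq t u) => [tu _ | tu /= tr]; last first.
  by rewrite {1}/updn eq_sym (negbTE tu) -addnA IHr //; lia.
subst u; have -> : count (a \o updn f t x) r = count (a \o f) r.
  by apply: eq_in_count => v vr; rewrite /= /updn; case: eqP => // vt; rewrite -vt vr in ur.
by rewrite /= /updn eqxx; lia.
Qed.

Lemma mv_scan_error_lt (V : Type) (d : nat -> option (mventry V)) k b :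
  mv_scan d k = ReadError b -> b < k.
Proof.
elim: k => //= k IHk; case: (d k) => [[|i v]|] //; first by case=> ->.
by move/IHk/ltnW.
Qed.

Lemma seq_min_le ds j : j \in ds -> seq_min ds <= j.
Proof.
rewrite /seq_min; elim: ds (head 0 ds) => //= x r IHr a.
rewrite in_cons => /predU1P[->|jr]; first exact: geq_minl.
exact: leq_trans (geq_minr _ _) (IHr a jr).
Qed.

Section Invariant.

Set Implicit Arguments.
Unset Strict Implicit.

Variables (L : eqType) (V : Type) (init : L -> V) (n : nat) (tx : nat -> prog L V) (m : nat).
Notation state := (gstate L V).
Notation pc := (tstate L V).
Implicit Types (s X : state) (p : pc).

Definition in_task p : bool :=
  match p with
  | TLoop None | TExit None | TN1 | TN2 _ | TNV1 | TNV2 | TNE1 | TNE2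
  | TCD1 | TCD2 _ | TCD3 _ _ | TCD4 _ | TCD5 _ | TCD6 => false
  | _ => true
  end.

(* The program points at which a thread is responsible for transaction [j]
   currently having status [st]. *)
Definition accounts (j : nat) (st : tstatus) p : bool :=
  match st, p with
  | READY_TO_EXECUTE, (TTI k | TFVV1 k _ | TFVV2 k _ | TFV3 k _ | TTIv k _) => k == j
  | READY_TO_EXECUTE, TFE3 _ _ _ ds _ => j \in ds
  | READY_TO_EXECUTE, TFEX1 _ _ _ t' => t' <= j
  | EXECUTING, (TLoop (Some (ExecTask k _)) | TExit (Some (ExecTask k _)) | TVM k _ _ _ _
               | TAD1 k _ _ | TAD2 k _ _ | TRW k _ _ _ _ | TRR k _ _ _ _ _ | TRRS k _ _ _
               | TFE1 k _ _) => k == j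
  | ABORTING, (TAD3 k _ _ | TCE1 k _ | TCE2 k _ _) => k == j
  | ABORTING, TFE3 _ _ _ _ rem => j \in rem
  | _, _ => false
  end.

Definition finishing (b : nat) p : bool := if p is TFE2 k _ _ then k == b else false.

Definition dep_lock p : option nat :=
  match p with TAD2 _ _ b | TAD3 _ _ b => Some b | _ => None end.

Definition local_ok p : bool :=
  match p with
  | TAD1 k _ b | TAD2 k _ b | TAD3 k _ b => b < k
  | TFE3 _ _ _ ds rem => all (mem ds) rem
  | _ => true
  end.

Definition owned s (P : pred pc) := exists2 u, u < m & P (thr s u).

(* txn_dependency[b] has not been swapped out yet since b last became EXECUTED. *)
Definition deps_pending s b := ~~ is_executed (status s b) \/ owned s (finishing b).

Definition status_witness s j (st : tstatus) : Prop :=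
  match st with
  | READY_TO_EXECUTE => exec_idx s <= j
  | EXECUTING => False
  | EXECUTED => True
  | ABORTING => exists b, j \in deps s b
  end.

Definition status_accounted s j :=
  let st := (status s j).2 in status_witness s j st \/ owned s (accounts j st).

Definition active_counted s := active s = count (in_task \o thr s) (iota 0 m).
Definition statuses_accounted s := forall j, j < n -> status_accounted s j.
Definition deps_ok s := forall b j, j \in deps s b -> b < j /\ deps_pending s b.
Definition threads_ok s := forall u, u < m -> local_ok (thr s u).
Definition dep_locks_ok s := forall u b, u < m -> dep_lock (thr s u) = Some b ->
  [/\ dlock s b, deps_pending s b &
      forall u', u' < m -> dep_lock (thr s u') = Some b -> u' = u].

Record invariant s : Prop := Invariant {
  inv_active : active_counted s;
  inv_status : statuses_accounted s;
  inv_deps : deps_ok s;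
  inv_threads : threads_ok s;
  inv_locks : dep_locks_ok s }.

Lemma thr_set_thr X t p u : thr (set_thr X t p) u = if u == t then p else thr X u.
Proof. by []. Qed.

Lemma owned_set_thr s X t p (P : pred pc) : t < m -> thr X = thr s -> owned s P ->
  (P (thr s t) -> P p) -> owned (set_thr X t p) P.
Proof.
move=> tm eqX [u um Pu] Pt; exists u => //; rewrite thr_set_thr eqX.
by case: eqP => [eut|//]; apply: Pt; rewrite -eut.
Qed.

Lemma owned_by_new X t p (P : pred pc) : t < m -> P p -> owned (set_thr X t p) P.
Proof. by move=> tm Pp; exists t; rewrite ?thr_set_thr ?eqxx. Qed.

Lemma owned_set_thr_or s X t p (P : pred pc) (Q : Prop) : thr X = thr s -> owned s P ->
  (P (thr s t) -> Q \/ P p) -> Q \/ owned (set_thr X t p) P.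
Proof.
move=> eqX [u um Pu] Pt; case: (eqVneq u t) => [eut|neut].
- by subst u; case: (Pt Pu) => [q|Pp]; [left | right; exact: owned_by_new].
- by right; exists u; rewrite // thr_set_thr (negbTE neut) eqX.
Qed.

Lemma deps_pending_step s X t p b : t < m -> thr X = thr s ->
  (finishing b (thr s t) -> finishing b p) ->
  (is_executed (status X b) -> is_executed (status s b) \/ finishing b p) ->
  deps_pending s b -> deps_pending (set_thr X t p) b.
Proof.
move=> tm eqX fin exe [unexe|own]; last by right; exact: owned_set_thr own fin.
case exeX: (is_executed (status X b)); last by left; rewrite /= exeX.
by case: (exe exeX) => [e|f]; [rewrite e in unexe | right; exact: owned_by_new].
Qed.

Ltac step_cases := repeat match goal with
  | |- context [match ?x with _ => _ end] => destruct x eqn:?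
  | |- Some _ = Some _ -> _ => case=> <-
  | |- None = Some _ -> _ => discriminate
  end.

Lemma active_counted_step s t s' : invariant s -> t < m ->
  tstep init n tx s t = Some s' -> active_counted s'.
Proof.
case=> cnt _ _ _ _ tm.
have tm' : t \in iota 0 m by rewrite mem_iota.
have C x := count_updn in_task (thr s) t x (iota_uniq 0 m) tm'.
rewrite /tstep; destruct (thr s t) eqn:E; step_cases.
all: match goal with |- context [set_thr ?X _ ?p] => move: (C p) end.
all: rewrite /active_counted /= ?E cnt; lia.
Qed.

Lemma threads_ok_step s t s' : invariant s -> t < m ->
  tstep init n tx s t = Some s' -> threads_ok s'.
Proof.
case=> _ _ _ loc _ tm; have loct := loc t tm.
rewrite /tstep; destruct (thr s t) eqn:E; step_cases.
all: move=> u um; rewrite thr_set_thr; case: eqP => [_|_]; last exact: loc.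
all: rewrite ?E //= in loct *.
all: try (by apply/allP); try by case/andP: loct.
all: by apply: mv_scan_error_lt; eassumption.
Qed.

Lemma deps_ok_frame s X t p : deps_ok s -> t < m -> thr X = thr s ->
  (forall b j, j \in deps X b ->
     (j \in deps s b \/ b < j /\ deps_pending s b) /\ (finishing b (thr s t) -> finishing b p)) ->
  (forall b, is_executed (status X b) -> is_executed (status s b) \/ finishing b p) ->
  deps_ok (set_thr X t p).
Proof.
move=> ok tm eqX sub exe b j /sub[jb fin].
have [bj pend] : b < j /\ deps_pending s b by case: jb => [/ok|].
by split=> //; exact: deps_pending_step tm eqX fin (exe b) pend.
Qed.

Lemma deps_ok_step s t s' : invariant s -> t < m ->
  tstep init n tx s t = Some s' -> deps_ok s'.
Proof.
case=> _ _ ok loc locks tm; have loct := loc t tm.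
rewrite /tstep; destruct (thr s t) eqn:E; step_cases.
all: apply: (deps_ok_frame ok tm) => //;
  [move=> c j; rewrite ?E /= ?/updn | move=> c /=; rewrite ?/updn].
all: try case: eqP => [->|nc];
  try by [move=> jc; split=> //; left | left | right; rewrite /= eqxx].
- have /(locks t n2 tm)[_ pend _] : dep_lock (thr s t) = Some n2 by rewrite E.
  by rewrite in_cons => /predU1P[->|jd]; split=> //; [right | left].
- by move=> jc; split=> [|/eqP kc]; [left | case: nc].
Qed.

Lemma dep_locks_ok_frame s X t p : dep_locks_ok s -> t < m -> thr X = thr s ->
  (dep_lock p = None \/ dep_lock p = dep_lock (thr s t)) ->
  (forall b, dlock s b -> dlock X b \/ dep_lock (thr s t) = Some b /\ dep_lock p = None) ->
  (forall b, finishing b (thr s t) -> finishing b p \/ ~~ dlock s b) ->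
  (forall b, is_executed (status X b) -> is_executed (status s b) \/ finishing b p) ->
  dep_locks_ok (set_thr X t p).
Proof.
move=> ok tm eqX hp hlock hfin hexe u b um.
have pend_step : dlock s b -> deps_pending s b -> deps_pending (set_thr X t p) b.
  move=> db; apply: deps_pending_step tm eqX _ (hexe b) => /hfin[//|].
  by rewrite db.
rewrite thr_set_thr; case: eqP => [-> pb | /eqP ut].
  have tb : dep_lock (thr s t) = Some b by case: hp; rewrite pb // => ->.
  have [db pend uniq] := ok t b tm tb; split.
  - by case: (hlock b db) => // -[_]; rewrite pb.
  - exact: pend_step.
  - by move=> u' u'm; rewrite thr_set_thr eqX; case: eqP => // _ /(uniq u' u'm).
rewrite eqX => ub; have [db pend uniq] := ok u b um ub; split.
- by case: (hlock b db) => // -[/(uniq t tm) tu]; rewrite tu eqxx in ut.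
- exact: pend_step.
- move=> u' u'm; rewrite thr_set_thr eqX; case: eqP => [_|_ /(uniq u' u'm)//].
  by case: hp => [-> // | -> /(uniq t tm) tu]; rewrite tu eqxx in ut.
Qed.

Lemma dep_locks_ok_step s t s' : invariant s -> t < m ->
  tstep init n tx s t = Some s' -> dep_locks_ok s'.
Proof.
case=> _ _ _ _ ok tm.
rewrite /tstep; destruct (thr s t) eqn:E; step_cases.
all: try (apply: (dep_locks_ok_frame ok tm) => //; [
  rewrite ?E; by [left | right] |
  move=> c dc /=; rewrite ?/updn; try case: eqP => [->|_]; by [left | right; rewrite E] |
  move=> c; rewrite E //= => /eqP <-; right; apply/negbT; assumption |
  move=> c /=; rewrite ?/updn; try case: eqP => [->|_];
    by [left | right; rewrite /= eqxx | done] ]).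
rename Heqb into unlocked, Heqb0 into unexecuted.
move=> u b um; rewrite thr_set_thr; case: eqP => [-> [<-] | _ ub].
  split; first by rewrite /= /updn eqxx.
  - by left; rewrite /= unexecuted.
  - move=> u' u'm; rewrite thr_set_thr; case: eqP => // _ /(ok u' n2 u'm)[].
    by rewrite unlocked.
have [db pend uniq] := ok u b um ub.
have bn : b != n2 by apply: contraTneq db => ->; rewrite unlocked.
split; first by rewrite /= /updn (negbTE bn).
- by apply: deps_pending_step pend; rewrite ?E //; left.
- move=> u' u'm; rewrite thr_set_thr; case: eqP => [_ [bn']|_]; last exact: uniq.
  by rewrite bn' eqxx in bn.
Qed.

Lemma statuses_accounted_frame s X t p (K : pred nat) :
  statuses_accounted s -> t < m -> thr X = thr s ->
  (forall j, ~~ K j -> status X j = status s j) ->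
  (forall j, j < n -> K j -> status_accounted (set_thr X t p) j) ->
  (forall j, j < n -> ~~ K j -> status_witness s j (status s j).2 ->
     status_witness X j (status s j).2 \/ accounts j (status s j).2 p) ->
  (forall j, j < n -> ~~ K j -> accounts j (status s j).2 (thr s t) ->
     status_witness X j (status s j).2 \/ accounts j (status s j).2 p) ->
  statuses_accounted (set_thr X t p).
Proof.
move=> ok tm eqX same hK hwit hown j jn; case: (boolP (K j)) => Kj; first exact: hK.
rewrite /status_accounted /= (same j Kj).
case: (ok j jn) => [/(hwit j jn Kj)[wit | acc] | own]; first by left.
  by right; exact: owned_by_new.
exact: owned_set_thr_or eqX own (hown j jn Kj).
Qed.

Lemma statuses_accounted_step s t s' : invariant s -> t < m ->
  tstep init n tx s t = Some s' -> statuses_accounted s'.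
Proof.
case=> _ ok _ loc _ tm; have loct := loc t tm.
rewrite /tstep; destruct (thr s t) eqn:E; step_cases.
all: first [ match goal with |- statuses_accounted (set_thr (set_status _ ?k _) _ _) =>
               apply: (statuses_accounted_frame (K := pred1 k) ok tm) => //;
               [by move=> j /= /negbTE; rewrite /updn => -> | ..] end
           | apply: (statuses_accounted_frame (K := pred0) ok tm) => // ].
all: move=> j jn hj.
all: try match goal with |- status_accounted _ _ =>
  move/eqP: hj => ->; rewrite /status_accounted /= /updn eqxx /=;
  try by [left | right; apply: owned_by_new; rewrite //= ?eqxx] end.
all: try match goal with |- status_witness _ _ _ -> _ =>
  first [by move=> w; left | case: (status s j).2 => //=; try by left] end.
all: try match goal with |- is_true (accounts _ _ (thr _ _)) -> _ =>
  rewrite E; case hst: (status s j).2 => //=; try by move=> h; right end.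
all: try by move/eqP=> kj; rewrite kj /= eqxx in hj.
all: try by move/eqP=> kj; move: Heqb; rewrite kj jn /is_ready hst.
- by rewrite leq_eqVlt => /predU1P[->|lt]; [right; exact: eqxx | left].
- by case=> c jc; left; exists c; rewrite /updn; case: eqP => // <-.
- by move/eqP=> <-; left; exists n2; rewrite /updn eqxx.
- by case=> c jc; left; exists c; rewrite /updn; case: eqP => // <-; rewrite in_cons jc orbT.
- by move/eqP=> <-; left; exists n2; rewrite /updn eqxx mem_head.
- case=> c jc; case: (eqVneq c n0) => [<- | cn]; first by right.
  by left; exists c; rewrite /updn (negbTE cn).
- by move=> jd; right; exact: seq_min_le.
- right; apply: owned_by_new => //=.
  by move: loct => /= /andP[].
- by rewrite in_cons => /predU1P[jn2 | jl]; [rewrite jn2 /= eqxx in hj | right].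
- by move=> le; left; exact: leq_trans (geq_minl _ _) le.
- by move=> le; left; exact: leq_trans (geq_minr _ _) le.
- by move/eqP=> <-; left; rewrite leqNgt Heqb.
Qed.

Lemma invariant_step s t s' : invariant s -> t < m ->
  tstep init n tx s t = Some s' -> invariant s'.
Proof.
move=> inv tm st; split.
- exact: active_counted_step inv tm st.
- exact: statuses_accounted_step inv tm st.
- exact: deps_ok_step inv tm st.
- exact: threads_ok_step inv tm st.
- exact: dep_locks_ok_step inv tm st.
Qed.

Lemma invariant_init : invariant (init_state L V).
Proof. by split=> //; [rewrite /active_counted /=; elim: (iota 0 m) | left]. Qed.

Lemma invariant_reachable s : reachable init n tx m s -> invariant s.
Proof.
by elim=> [|s0 t s' _ inv tm st]; [exact: invariant_init | exact: invariant_step inv tm st].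
Qed.

Lemma accounts_in_task j st p : accounts j st p -> in_task p.
Proof. by case: st; case: p => // [] [] // []. Qed.

Lemma finishing_in_task b p : finishing b p -> in_task p.
Proof. by case: p. Qed.

Lemma interval_in_task p x :
  prevalidating p x \/ (exists i, executing p x i) \/ (exists i, validating p x i) ->
  in_task p.
Proof. by case=> [[->|->] | [[i] | [i]]] //; case: p => // [] [] [] //. Qed.

Lemma idle_at_zero_active s : invariant s -> active s = 0%R ->
  forall u, u < m -> ~~ in_task (thr s u).
Proof.
case=> cnt _ _ _ _; rewrite cnt => /eqP; rewrite -[0%R]/(Posz 0) eqz_nat.
by rewrite -leqn0 leqNgt -has_count => /hasPn idle u um; apply: idle; rewrite mem_iota.
Qed.

Lemma quiescent_all_executed s : invariant s -> active s = 0%R -> n <= exec_idx s ->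
  forall j, j < n -> is_executed (status s j).
Proof.
move=> inv /(idle_at_zero_active inv) idle en.
have unowned (P : pred pc) : owned s P -> exists2 p, P p & ~~ in_task p.
  by case=> u um Pu; exists (thr s u); last exact: idle.
elim/ltn_ind=> j IHj jn; have := inv_status inv jn; rewrite /status_accounted.
case: (status s j) => i [] /= [wit | /unowned[p /accounts_in_task -> //]] //.
- by move: (leq_trans en wit); rewrite leqNgt jn.
- case: wit => b /(inv_deps inv)[bj [unexe | /unowned[p /finishing_in_task -> //]]].
  by rewrite IHj ?(ltn_trans bj jn) in unexe.
Qed.

End Invariant.

Theorem mainTheorem2 (L : eqType) (V : Type) (init : L -> V) (n : nat)
    (tx : nat -> prog L V) (m : nat) (s : gstate L V) :
  reachable init n tx m s ->
  n <= exec_idx s -> n <= val_idx s -> active s = 0%R ->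
  forall k, k < n -> globally_committed n m s k.
Proof.
move=> reach en vn idle k kn; have inv := invariant_reachable reach.
have executed := quiescent_all_executed inv idle en.
move=> x [-> | [[xn] | [u [um interval]]]].
- exact: leq_trans kn vn.
- by rewrite executed.
- by have := idle_at_zero_active inv idle um; rewrite (interval_in_task interval).
Qed.
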